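(* Let $\otimes$ and $\oplus$ be uninorms on $[0,1]$. If $\otimes$ is a $T$-norm which is a copula and $\oplus$ satisfies property $A'$, then $(\otimes,\oplus)$ satisfies the rearrangement inequality. If $\otimes$ satisfies property $A$ and $\oplus$ is a $T$-conorm which is the dual $\Phi(c)(x,y)=1-c(1-x,1-y)$ of a copula $c$, then $(\otimes,\oplus)$ satisfies the dual rearrangement inequality.
   Context: A uninorm is a function $\otimes:[0,1]^2\to[0,1]$ that is commutative, associative, monotonic ($x\leq y$ implies $x\otimes z\leq y\otimes z$), and has an identity element $e\in[0,1]$; a $T$-norm is a uninorm with identity $1$, a $T$-conorm one with identity $0$. A copula is a function $c:[0,1]^2\to[0,1]$ that satisfies neutrality of $1$, is monotonic, and satisfies property $B$: for all $0\leq x\leq y\leq1$, $0\leq z\leq w\leq1$, $c(x,w)-c(x,z)\leq c(y,w)-c(y,z)$. Property $A$: for all $0\leq x\leq y\leq z\leq w\leq 1$, $w+x\leq y+z\Rightarrow f(x,w)\leq f(y,z)$; property $A'$: for all such, $w+x\geq y+z\Rightarrow f(x,w)\geq f(y,z)$. $(\otimes,\oplus)$ satisfies the rearrangement inequality if for every $n\geq1$, all $0\leq x_1\leq\cdots\leq x_n\leq 1$, $0\leq y_1\leq\cdots\leq y_n\leq 1$ and every permutation $\sigma$ of $\{1,\dots,n\}$, $$(x_n\otimes y_1)\oplus\cdots\oplus(x_1\otimes y_n)\leq (x_{\sigma(1)}\otimes y_1)\oplus\cdots\oplus(x_{\sigma(n)}\otimes y_n)\leq (x_1\otimes y_1)\oplus\cdots\oplus(x_n\otimes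 y_n),$$ and the dual rearrangement inequality if for all such data $$(x_n\oplus y_1)\otimes\cdots\otimes(x_1\oplus y_n)\geq (x_{\sigma(1)}\oplus y_1)\otimes\cdots\otimes(x_{\sigma(n)}\oplus y_n)\geq (x_1\oplus y_1)\otimes\cdots\otimes(x_n\oplus y_n).$$ *)

From HB Require Import structures.
From mathcomp Require Import all_boot all_order all_algebra all_fingroup.
From mathcomp Require Import reals.
Set Implicit Arguments. Unset Strict Implicit. Unset Printing Implicit Defensive.
Import Order.TTheory GRing.Theory Num.Theory.
Local Open Scope ring_scope.

Section Defs.
Variable R : realType.

Definition in01 (x : R) : Prop := 0 <= x <= 1.

Definition uninorm_with (f : R -> R -> R) (e : R) : Prop :=
  (forall x y, in01 x -> in01 y -> in01 (f x y)) /\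
  (forall x y, in01 x -> in01 y -> f x y = f y x) /\
  (forall x y z, in01 x -> in01 y -> in01 z -> f x (f y z) = f (f x y) z) /\
  (forall x y z, in01 x -> in01 y -> in01 z -> x <= y -> f x z <= f y z) /\
  in01 e /\
  (forall x, in01 x -> f e x = x).

Definition uninorm (f : R -> R -> R) : Prop := exists e, uninorm_with f e.
Definition tnorm (f : R -> R -> R) : Prop := uninorm_with f 1.
Definition tconorm (f : R -> R -> R) : Prop := uninorm_with f 0.

Definition copula (c : R -> R -> R) : Prop :=
  [/\ (forall x y, in01 x -> in01 y -> in01 (c x y)),
      (forall x, in01 x -> c x 1 = x /\ c 1 x = x),
      (forall x y z, in01 x -> in01 y -> in01 z -> x <= y -> c x z <= c y z),
      (forall x y z, in01 x -> in01 y -> in01 z -> x <= y -> c z x <= c z y) &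
      (forall x y z w, 0 <= x -> x <= y -> y <= 1 -> 0 <= z -> z <= w -> w <= 1 ->
         c x w - c x z <= c y w - c y z)].

Definition dual_of (c : R -> R -> R) : R -> R -> R :=
  fun x y => 1 - c (1 - x) (1 - y).

Definition propA (f : R -> R -> R) : Prop :=
  forall x y z w, 0 <= x -> x <= y -> y <= z -> z <= w -> w <= 1 ->
    w + x <= y + z -> f x w <= f y z.

Definition propA' (f : R -> R -> R) : Prop :=
  forall x y z w, 0 <= x -> x <= y -> y <= z -> z <= w -> w <= 1 ->
    w + x >= y + z -> f x w >= f y z.

Fixpoint fold1 (op : R -> R -> R) (s : seq R) : R :=
  match s with
  | [::] => 0
  | [:: a] => a
  | a :: s' => op a (fold1 op s')
  end.

(* sorted data in [0,1], indexed by 'I_n (index i stands for i+1 in the paper) *)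
Definition sorted01 (n : nat) (x : 'I_n -> R) : Prop :=
  (forall i, in01 (x i)) /\ (forall i j : 'I_n, (i <= j)%N -> x i <= x j).

Definition comb (op1 op2 : R -> R -> R) (n : nat) (x y : 'I_n -> R)
  (s : 'I_n -> 'I_n) : R :=
  fold1 op2 [seq op1 (x (s i)) (y i) | i <- enum 'I_n].

Definition rearrangement (otimes oplus : R -> R -> R) : Prop :=
  forall (n : nat) (x y : 'I_n -> R) (sigma : 'S_n), (0 < n)%N ->
    sorted01 x -> sorted01 y ->
    comb otimes oplus x y (@rev_ord n) <= comb otimes oplus x y sigma
    /\ comb otimes oplus x y sigma <= comb otimes oplus x y id.

Definition dual_rearrangement (otimes oplus : R -> R -> R) : Prop :=
  forall (n : nat) (x y : 'I_n -> R) (sigma : 'S_n), (0 < n)%N ->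
    sorted01 x -> sorted01 y ->
    comb oplus otimes x y (@rev_ord n) >= comb oplus otimes x y sigma
    /\ comb oplus otimes x y sigma >= comb oplus otimes x y id.

End Defs.

(* For two pairs the rearrangement inequality reduces, once the four inner
   values are named so that p is the least and s the greatest, to comparing
   O q r with O p s. A copula is supermodular (property B), so q + r <= p + s
   and property A' gives O q r <= O p s; the dual of a copula is submodular, so
   property A gives the reverse comparison for the dual inequality. The general
   case follows by insertion sort: inserting one more element into a sorted
   pairing only swaps partners of neighbouring terms, each swap is an instance
   of the two-pair inequality, and associativity, commutativity and
   monotonicity of the outer uninorm carry it through the rest of the fold. *)

From mathcomp Require Import all_boot all_order all_algebra all_fingroup.
From mathcomp Require Import reals lra.
Set Implicit Arguments. Unset Strict Implicit. Unset Printing Implicit Defensive.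
Import Order.TTheory GRing.Theory Num.Theory.
Local Open Scope ring_scope.

Lemma in_cons_split (T : eqType) (P : T -> Prop) a s :
  {in a :: s, forall x, P x} -> P a /\ {in s, forall x, P x}.
Proof. by move=> Ps; split=> [|x xs]; apply: Ps; rewrite in_cons ?eqxx ?xs ?orbT. Qed.

Lemma merge1_cons (T : Type) (r : rel T) a b s :
  merge r [:: a] (b :: s) = if r a b then [:: a, b & s] else b :: merge r [:: a] s.
Proof. by []. Qed.

Section Uninorm.
Variables (R : realType) (f : R -> R -> R) (e : R).
Hypothesis f_uninorm : uninorm_with f e.

Lemma uninorm_in01 x y : in01 x -> in01 y -> in01 (f x y).
Proof. by case: f_uninorm => cl _; apply: cl. Qed.

Lemma uninormC x y : in01 x -> in01 y -> f x y = f y x.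
Proof. by case: f_uninorm => _ [fC _]; apply: fC. Qed.

Lemma uninormA x y z : in01 x -> in01 y -> in01 z -> f x (f y z) = f (f x y) z.
Proof. by case: f_uninorm => _ [_ [fA _]]; apply: fA. Qed.

Lemma le_uninorml x y z : in01 x -> in01 y -> in01 z -> x <= y -> f x z <= f y z.
Proof. by case: f_uninorm => _ [_ [_ [fM _]]]; apply: fM. Qed.

Lemma le_uninormr x y z : in01 x -> in01 y -> in01 z -> x <= y -> f z x <= f z y.
Proof. by move=> x01 y01 z01 xy; rewrite [f z x]uninormC // [f z y]uninormC // le_uninorml. Qed.

Lemma fold1_uninorm s : s != [::] -> {in s, forall x, in01 x} -> fold1 f s = foldr f e s.
Proof.
have [_ [_ [_ [_ [e01 fe]]]]] := f_uninorm.
elim: s => [|a [|b s] IHs] // _ /in_cons_split[a01 s01] /=.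
  by rewrite uninormC ?fe.
by rewrite -/(fold1 f (b :: s)) IHs.
Qed.

Lemma propA'_le p q r s : propA' f ->
  0 <= p -> p <= q -> p <= r -> q <= s -> r <= s -> s <= 1 ->
  q + r <= p + s -> f q r <= f p s.
Proof.
move=> fA' p0 pq pr qs rs s1 qrps.
have [qr|rq] := lerP q r; first by apply: fA' => //; lra.
by rewrite uninormC; [apply: fA' => //; lra | apply/andP; lra ..].
Qed.

Lemma propA_ge p q r s : propA f ->
  0 <= p -> p <= q -> p <= r -> q <= s -> r <= s -> s <= 1 ->
  p + s <= q + r -> f p s <= f q r.
Proof.
move=> fA p0 pq pr qs rs s1 psqr.
have [qr|rq] := lerP q r; first by apply: fA => //; lra.
by rewrite [f q r]uninormC; [apply: fA => //; lra | apply/andP; lra ..].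
Qed.

End Uninorm.

Section Copula.
Variables (R : realType) (c : R -> R -> R).
Hypothesis c_copula : copula c.

Lemma copula_supermodular a b x y :
  0 <= a -> a <= b -> b <= 1 -> 0 <= x -> x <= y -> y <= 1 ->
  c a y + c b x <= c a x + c b y.
Proof. by case: c_copula => _ _ _ _ cB *; have := cB a b x y; lra. Qed.

Lemma dual_copula_submodular a b x y :
  0 <= a -> a <= b -> b <= 1 -> 0 <= x -> x <= y -> y <= 1 ->
  dual_of c a x + dual_of c b y <= dual_of c a y + dual_of c b x.
Proof.
move=> *; rewrite /dual_of.
have := @copula_supermodular (1 - b) (1 - a) (1 - y) (1 - x); lra.
Qed.

End Copula.

(* The case n = 2 of the rearrangement inequality, relative to an order r on the
   first arguments and an order ord on the results. *)
Definition exchange (R : realType) (O I : R -> R -> R) (ord r : rel R) : Prop :=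
  forall a b x y, in01 a -> in01 b -> in01 x -> in01 y -> r a b -> x <= y ->
    ord (O (I b x) (I a y)) (O (I a x) (I b y)).

Lemma exchange_flip (R : realType) (O I : R -> R -> R) (ord : rel R) :
  exchange O I ord <=%R -> exchange O I (fun u v => ord v u) >=%R.
Proof. by move=> OIx a b x y a01 b01 x01 y01 ba; apply: OIx. Qed.

Lemma copula_propA'_exchange (R : realType) (c O : R -> R -> R) (e : R) :
  copula c -> uninorm_with O e -> propA' O -> exchange O c <=%R <=%R.
Proof.
move=> c_copula O_uninorm OA' a b x y a01 b01 x01 y01 ab xy.
have [c01 _ c_monol c_monor _] := c_copula.
move: (a01) (b01) (x01) (y01) => /andP[a0 a1] /andP[b0 b1] /andP[x0 x1] /andP[y0 y1].
have /andP[cax0 _] := c01 a x a01 x01; have /andP[_ cby1] := c01 b y b01 y01.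
apply: (propA'_le O_uninorm OA') => //; try by [apply: c_monol | apply: c_monor].
by rewrite addrC; apply: (copula_supermodular c_copula).
Qed.

Lemma dual_copula_propA_exchange (R : realType) (O P c : R -> R -> R) (e : R) :
  uninorm_with O e -> propA O -> tconorm P -> copula c ->
  (forall x y, in01 x -> in01 y -> P x y = dual_of c x y) ->
  exchange O P >=%R <=%R.
Proof.
move=> O_uninorm OA P_tconorm c_copula Pc a b x y a01 b01 x01 y01 ab xy /=.
move: (a01) (b01) (x01) (y01) => /andP[a0 a1] /andP[b0 b1] /andP[x0 x1] /andP[y0 y1].
have /andP[Pax0 _] := uninorm_in01 P_tconorm a01 x01.
have /andP[_ Pby1] := uninorm_in01 P_tconorm b01 y01.
apply: (propA_ge O_uninorm OA) => //;
  try by [apply: (le_uninorml P_tconorm) | apply: (le_uninormr P_tconorm)].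
by rewrite !Pc // [X in _ <= X]addrC; apply: (dual_copula_submodular c_copula).
Qed.

Definition fold_zip (R : realType) (O I : R -> R -> R) (e : R) (xs ys : seq R) : R :=
  foldr O e [seq I p.1 p.2 | p <- zip xs ys].

Lemma fold_zip_cons (R : realType) (O I : R -> R -> R) e a b xs ys :
  fold_zip O I e (a :: xs) (b :: ys) = O (I a b) (fold_zip O I e xs ys).
Proof. by []. Qed.

Section SortedPairing.
Variables (R : realType) (O I : R -> R -> R) (e : R) (ord r : rel R).
Hypothesis O_uninorm : uninorm_with O e.
Hypothesis I_in01 : forall x y, in01 x -> in01 y -> in01 (I x y).
Hypotheses (ord_refl : reflexive ord) (ord_trans : transitive ord).
Hypothesis ord_homoO :
  forall u v w, in01 u -> in01 v -> in01 w -> ord u v -> ord (O u w) (O v w).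
Hypotheses (r_total : total r) (r_trans : transitive r) (r_anti : antisymmetric r).
Hypothesis O_I_exchange : exchange O I ord r.

Local Notation F := (fold_zip O I e).

Lemma ord_homoOr u v w : in01 u -> in01 v -> in01 w -> ord u v -> ord (O w u) (O w v).
Proof.
move=> u01 v01 w01 uv.
by rewrite [O w u](uninormC O_uninorm) // [O w v](uninormC O_uninorm) // ord_homoO.
Qed.

Lemma fold_zip_in01 xs ys :
  {in xs, forall x, in01 x} -> {in ys, forall y, in01 y} -> in01 (F xs ys).
Proof.
have [_ [_ [_ [_ [e01 _]]]]] := O_uninorm.
elim: xs ys => [|a xs IHxs] [|b ys] // /in_cons_split[a01 xs01] /in_cons_split[b01 ys01].
rewrite fold_zip_cons; exact (uninorm_in01 O_uninorm (I_in01 a01 b01) (IHxs ys xs01 ys01)).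
Qed.

Lemma fold_zip_merge1 a y s ys :
  in01 a -> in01 y -> {in s, forall x, in01 x} -> {in ys, forall y, in01 y} ->
  size s = size ys -> sorted r s -> path <=%R y ys ->
  ord (O (I a y) (F s ys)) (F (merge r [:: a] s) (y :: ys)).
Proof.
elim: s y ys => [|b s IHs] y [|y1 ys] // a01 y01 bs01 y1ys01 [size_s] s_path.
move=> /andP[yy1 y1_path].
have [[b01 s01] [y101 ys01]] := (in_cons_split bs01, in_cons_split y1ys01).
rewrite merge1_cons; case: ifP => rab; first exact (ord_refl _).
have rba : r b a by have := r_total a b; rewrite rab.
have merge01 : {in merge r [:: a] s, forall x, in01 x}.
  by move=> x; rewrite mem_merge in_cons => /orP[/eqP-> | /s01].
have [Iay Iby1 Iby Iay1] :
    [/\ in01 (I a y), in01 (I b y1), in01 (I b y) & in01 (I a y1)] by split; exact: I_in01.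
have [Fs Fm] : in01 (F s ys) /\ in01 (F (merge r [:: a] s) (y1 :: ys)).
  by split; exact: fold_zip_in01.
rewrite !fold_zip_cons.
apply: (@ord_trans (O (I b y) (O (I a y1) (F s ys)))).
  rewrite !(uninormA O_uninorm) //.
  apply: ord_homoO => //; try exact: (uninorm_in01 O_uninorm).
  exact: O_I_exchange.
apply: ord_homoOr => //; first exact (uninorm_in01 O_uninorm Iay1 Fs).
by apply: IHs => //; apply: path_sorted s_path.
Qed.

Lemma sort_cons a t : sort r (a :: t) = merge r [:: a] (sort r t).
Proof.
apply: (sorted_eq r_trans r_anti); rewrite ?sort_sorted ?merge_sorted ?sort_sorted //.
by rewrite perm_sort perm_sym perm_merge /= perm_cons perm_sort.
Qed.

Lemma fold_zip_sort t ys :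
  {in t, forall x, in01 x} -> {in ys, forall y, in01 y} ->
  size t = size ys -> sorted <=%R ys -> ord (F t ys) (F (sort r t) ys).
Proof.
elim: t ys => [|a t IHt] [|y ys] // at01 yys01 [size_t] y_path.
have [[a01 t01] [y01 ys01]] := (in_cons_split at01, in_cons_split yys01).
have sort01 : {in sort r t, forall x, in01 x} by move=> x; rewrite mem_sort => /t01.
rewrite sort_cons fold_zip_cons.
apply: (@ord_trans (O (I a y) (F (sort r t) ys))).
  apply: ord_homoOr; [exact: fold_zip_in01 | exact: fold_zip_in01 | exact: I_in01 |].
  by apply: IHt => //; apply: path_sorted y_path.
by apply: fold_zip_merge1; rewrite ?size_sort ?sort_sorted.
Qed.

Lemma fold_zip_sorted t s ys : perm_eq t s -> sorted r s ->
  {in t, forall x, in01 x} -> {in ys, forall y, in01 y} ->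
  size t = size ys -> sorted <=%R ys -> ord (F t ys) (F s ys).
Proof.
move=> ts s_sorted; rewrite -(sorted_sort r_trans s_sorted).
rewrite -(perm_sortP r_total r_trans r_anti _ _ ts); exact: fold_zip_sort.
Qed.

End SortedPairing.

Lemma perm_map_enum (T : finType) (f : T -> T) :
  injective f -> perm_eq (map f (enum T)) (enum T).
Proof.
move=> f_inj; apply: uniq_perm; rewrite ?(map_inj_uniq f_inj) ?enum_uniq // => y.
by rewrite mem_enum; apply: injF_onto.
Qed.

Lemma sorted_map_enum_ord (T : Type) (r : rel T) n (f : 'I_n -> T) :
  {homo f : i j / (i <= j)%N >-> r i j} -> sorted r (map f (enum 'I_n)).
Proof.
move=> f_homo; apply: (homo_sorted f_homo).
by have := iota_sorted 0 n; rewrite -val_enum_ord sorted_map.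
Qed.

Lemma comb_fold_zip (R : realType) (O I : R -> R -> R) e n (x y : 'I_n -> R)
    (s : 'I_n -> 'I_n) :
  uninorm_with O e -> (forall u v, in01 u -> in01 v -> in01 (I u v)) -> (0 < n)%N ->
  (forall i, in01 (x i)) -> (forall i, in01 (y i)) ->
  comb I O x y s = fold_zip O I e [seq x (s i) | i <- enum 'I_n] [seq y i | i <- enum 'I_n].
Proof.
move=> O_uninorm I_in01 n_gt0 x01 y01.
rewrite /comb /fold_zip zip_map -map_comp (fold1_uninorm O_uninorm) //.
  by rewrite -size_eq0 size_map size_enum_ord -lt0n.
by move=> _ /mapP[i _ ->]; apply: I_in01.
Qed.

Lemma comb_extremal (R : realType) (O I : R -> R -> R) e (ord : rel R) :
  uninorm_with O e -> (forall u v, in01 u -> in01 v -> in01 (I u v)) ->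
  reflexive ord -> transitive ord ->
  (forall u v w, in01 u -> in01 v -> in01 w -> ord u v -> ord (O u w) (O v w)) ->
  exchange O I ord <=%R ->
  forall n (x y : 'I_n -> R) (sigma : 'S_n), (0 < n)%N -> sorted01 x -> sorted01 y ->
    ord (comb I O x y (@rev_ord n)) (comb I O x y sigma) /\
    ord (comb I O x y sigma) (comb I O x y id).
Proof.
move=> O_uninorm I_in01 ord_refl ord_trans ord_homoO OI_exchange n x y sigma n_gt0
  [x01 x_homo] [y01 y_homo].
rewrite !(comb_fold_zip _ O_uninorm I_in01 n_gt0 x01 y01) /=.
set xs := [seq x i | i <- enum 'I_n]; set ys := [seq y i | i <- enum 'I_n].
set xs_sigma := [seq x (sigma i) | i <- enum 'I_n].
set xs_rev := [seq x (rev_ord i) | i <- enum 'I_n].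
have perm_xs (s : 'I_n -> 'I_n) : injective s -> perm_eq [seq x (s i) | i <- enum 'I_n] xs.
  by move=> s_inj; rewrite (map_comp x s) perm_map ?perm_map_enum.
have xs_sigma01 : {in xs_sigma, forall u, in01 u} by move=> _ /mapP[i _ ->].
have ys01 : {in ys, forall u, in01 u} by move=> _ /mapP[i _ ->].
have size_xs_sigma : size xs_sigma = size ys by rewrite !size_map.
have ys_sorted : sorted <=%R ys by apply: sorted_map_enum_ord.
have ord_homoO_flip u v w : in01 u -> in01 v -> in01 w -> ord v u -> ord (O v w) (O u w).
  by move=> u01 v01 w01; apply: ord_homoO.
split.
- apply: (fold_zip_sorted (ord := fun u v => ord v u) O_uninorm I_in01 ord_refl
    (rev_trans ord_trans) ord_homoO_flip ge_total ge_trans ge_anti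
    (exchange_flip OI_exchange)) => //.
    by rewrite (permPl (perm_xs _ perm_inj)) perm_sym perm_xs //; apply: rev_ord_inj.
  apply: sorted_map_enum_ord => i j ij; apply: x_homo.
  by rewrite /= leq_sub2l.
- apply: (fold_zip_sorted O_uninorm I_in01 ord_refl ord_trans ord_homoO
    le_total le_trans le_anti OI_exchange) => //.
    exact: perm_xs perm_inj.
  exact: sorted_map_enum_ord.
Qed.

Theorem theorem8 (R : realType) (otimes oplus : R -> R -> R) :
  uninorm otimes -> uninorm oplus ->
  (tnorm otimes -> copula otimes -> propA' oplus ->
     rearrangement otimes oplus)
  /\
  (propA otimes -> tconorm oplus ->
     (exists c : R -> R -> R, copula c /\
        forall x y, in01 x -> in01 y -> oplus x y = dual_of c x y) ->
     dual_rearrangement otimes oplus).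
Proof.
move=> [e_times otimes_uninorm] [e_plus oplus_uninorm]; split.
-
  move=> _ otimes_copula oplus_A' n x y sigma.
  have [otimes01 _ _ _ _] := otimes_copula.
  exact: (comb_extremal oplus_uninorm otimes01 (@le_refl _ _) (@le_trans _ _)
    (le_uninorml oplus_uninorm) (copula_propA'_exchange otimes_copula oplus_uninorm oplus_A')).
- move=> otimes_A oplus_tconorm [c [c_copula oplus_dual]] n x y sigma.
  have otimes_homo_ge u v w :
      in01 u -> in01 v -> in01 w -> v <= u -> otimes v w <= otimes u w.
    by move=> u01 v01 w01; exact: (le_uninorml otimes_uninorm v01 u01 w01).
  exact: (comb_extremal (ord := >=%R) otimes_uninorm (uninorm_in01 oplus_tconorm)
    (@le_refl _ _) (@ge_trans _ _) otimes_homo_ge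
    (dual_copula_propA_exchange otimes_uninorm otimes_A oplus_tconorm c_copula oplus_dual)).
Qed.
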